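(* For any nonzero circulant matrix $A\in\mathbb{R}_+^{n\times n}$, the sequence $\{(A/\lambda(A))^t\}_{t\ge1}$ of max-algebraic powers is ultimately periodic, and its transient satisfies $T(A)\le (n-1)^2+1$.
   Context: Max algebra on $\mathbb{R}_+$ with $\oplus=\max$ and ordinary product; $A^t$ is the max-algebraic power. A circulant matrix $\mathrm{Circ}(a_0,\dots,a_{n-1})$ has $A_{i,j}=a_t$ with $t\equiv j-i\pmod n$, $t\in\{0,\dots,n-1\}$. $\lambda(A)$ is the greatest max-algebraic eigenvalue (maximum cycle geometric mean). A sequence $\{\alpha_t\}$ is ultimately periodic if there are $T,\sigma$ with $\alpha_{t+\sigma}=\alpha_t$ for all $t\ge T$; the least such $T$ is the transient, denoted $T(A)$ for the sequence $\{(A/\lambda(A))^t\}$. *)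

(* Max algebra over the nonnegative elements of a real closed field R. *)
From HB Require Import structures.
From mathcomp Require Import all_boot all_order all_algebra.
Set Implicit Arguments. Unset Strict Implicit. Unset Printing Implicit Defensive.
Import Order.TTheory GRing.Theory Num.Theory.
Local Open Scope ring_scope.

Section MaxAlg.
Variable R : rcfType.

Definition mx_mul n (A B : 'M[R]_n) : 'M[R]_n :=
  \matrix_(i, j) \big[Num.max/0]_(k < n) (A i k * B k j).

Definition mx_id n : 'M[R]_n := \matrix_(i, j) (if i == j then 1 else 0).

Definition mx_pow n (A : 'M[R]_n) (t : nat) : 'M[R]_n := iter t (mx_mul A) (mx_id n).

Definition circ n (a : nat -> R) : 'M[R]_n :=
  \matrix_(i, j) a (((j + n - i) %% n)%N).

(* weight of the cycle x -> s_1 -> ... -> s_k -> x *)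
Definition cycle_weight n (A : 'M[R]_n) (x : 'I_n) (s : seq 'I_n) : R :=
  \prod_(p <- zip (x :: s) (rcons s x)) A p.1 p.2.

(* lam is the maximum cycle geometric mean of A (elementary cycles x :: s),
   i.e. lam = max over cycles c of w(c)^(1/|c|), written out without roots. *)
Definition is_max_cycle_mean n (A : 'M[R]_n) (lam : R) : Prop :=
  0 <= lam /\
  (forall x s, uniq (x :: s) -> cycle_weight A x s <= lam ^+ (size s).+1) /\
  (exists x s, uniq (x :: s) /\ cycle_weight A x s = lam ^+ (size s).+1).

Definition periodic_from (T' : Type) (f : nat -> T') (T : nat) : Prop :=
  exists sigma : nat, (0 < sigma)%N /\ forall t, (T <= t)%N -> f (t + sigma)%N = f t.

Definition ult_periodic (T' : Type) (f : nat -> T') : Prop :=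
  exists T, (1 <= T)%N /\ periodic_from f T.

Definition is_transient (T' : Type) (f : nat -> T') (T : nat) : Prop :=
  (1 <= T)%N /\ periodic_from f T /\
  forall T2, (1 <= T2)%N -> periodic_from f T2 -> (T <= T2)%N.

End MaxAlg.

From HB Require Import structures.
From mathcomp Require Import all_boot all_order all_algebra.
From mathcomp Require Import zify.
Import Order.TTheory GRing.Theory Num.Theory.
Set Implicit Arguments. Unset Strict Implicit.
Local Open Scope ring_scope.

(* Scale A so that its maximum cycle mean is 1, with scaled entries c_k.  The
   entry a_k of a circulant lies on the cycle i -> i+k -> i+2k -> ... (mod n),
   so every c_k <= 1, and a critical cycle contains some entry c_s0 = 1.  An
   entry (A^t)_ij is the best product c_k1 ... c_kt over offset sequences with
   k1 + ... + kt = j - i (mod n).  Appending n copies of s0 shows that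
   (A^t)_ij <= (A^(t+n))_ij.  Conversely, an offset sequence of length
   t + n > n (n - 1) repeats some offset n times by pigeonhole, and deleting
   those n copies keeps the residue and does not decrease the product.  Hence
   A^(t+n) = A^t as soon as t >= (n - 1)^2. *)


Lemma size_sum_count_mem (T : finType) (s : seq T) :
  size s = (\sum_(x : T) count_mem x s)%N.
Proof.
elim: s => [|y s IH]; first by rewrite big1.
rewrite /= big_split /= -IH (bigD1 y) //= eqxx big1 ?add1n ?addn0 // => x hx.
by rewrite eq_sym (negbTE hx).
Qed.

Lemma count_mem_pigeonhole (T : finType) (s : seq T) m :
  (#|T| * m < size s)%N -> exists x, (m < count_mem x s)%N.
Proof.
move=> hs; have [/existsP //|/existsPn hle] := boolP [exists x, m < count_mem x s]%N.
suff : (size s <= #|T| * m)%N by rewrite leqNgt hs.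
rewrite size_sum_count_mem -sum_nat_const; apply: leq_sum => x _.
by rewrite leqNgt hle.
Qed.

Lemma perm_nseq_cat (T : eqType) (x : T) (s : seq T) m :
  (m <= count_mem x s)%N -> exists s', perm_eq s (nseq m x ++ s').
Proof.
move=> hm; exists (filter (predC (pred1 x)) s ++ nseq (count_mem x s - m) x).
have hx : filter (pred1 x) s = nseq m x ++ nseq (count_mem x s - m) x.
  rewrite -nseqD subnKC // -size_filter.
  by apply/all_pred1P; rewrite filter_all.
rewrite -(perm_filterC (pred1 x) s) hx -!catA perm_cat2l.
by rewrite perm_catC.
Qed.

Lemma zip_belast_fpath (T : eqType) (f : T -> T) x p :
  fpath f x p -> zip (belast x p) p = [seq (y, f y) | y <- belast x p].
Proof. by elim: p x => [|y p IH] x //= /andP [/eqP -> /IH ->]. Qed.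

Lemma zip_fcycle (T : eqType) (f : T -> T) x s :
  fcycle f (x :: s) -> zip (x :: s) (rcons s x) = [seq (y, f y) | y <- x :: s].
Proof. by move/zip_belast_fpath; rewrite belast_rcons. Qed.

Section MaxAlgebra.
Variable R : rcfType.

Lemma cycle_weight_lt n (A : 'M[R]_n) lam x s :
  (forall i j, 0 <= A i j < lam) -> cycle_weight A x s < lam ^+ (size s).+1.
Proof.
move=> hA; rewrite /cycle_weight.
have -> : (size s).+1 = size (zip (x :: s) (rcons s x)).
  by rewrite size_zip size_rcons minnn.
rewrite -[size _]count_predT -iter_mulr_1 -big_const_seq.
by apply: ltr_prod => [|p _]; [case: s | exact: hA].
Qed.

Lemma mx_pow0E n (B : 'M[R]_n) i j : mx_pow B 0 i j = if i == j then 1 else 0.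
Proof. by rewrite mxE. Qed.

Lemma mx_powSE n (B : 'M[R]_n) t i j :
  mx_pow B t.+1 i j = \big[Num.max/0]_k (B i k * mx_pow B t k j).
Proof. by rewrite mxE. Qed.

Lemma mx_pow_ge0 n (B : 'M[R]_n) : (forall i j, 0 <= B i j) ->
  forall t i j, 0 <= mx_pow B t i j.
Proof.
move=> hB [|t] i j; first by rewrite mx_pow0E; case: eqP.
by rewrite mx_powSE bigmax_ge_id.
Qed.

Section Circulant.
Variables (n : nat) (n0 : (0 < n)%N).

Definition shift (k : nat) (i : 'I_n) : 'I_n := Ordinal (ltn_pmod (i + k) n0).
Definition offset (i j : 'I_n) : 'I_n := Ordinal (ltn_pmod (j + n - i) n0).

Lemma circE (a : nat -> R) i j : circ n a i j = a (offset i j).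
Proof. by rewrite mxE. Qed.

Lemma offset_shift k i : (k < n)%N -> offset i (shift k i) = k :> nat.
Proof.
move=> hk /=; have hi := ltn_ord i; case: (ltnP (i + k) n) => h.
  rewrite (modn_small h) (_ : (i + k + n - i = k + n)%N); last by lia.
  by rewrite modnDr modn_small.
have -> : ((i + k) %% n = i + k - n)%N.
  by rewrite -{1}(subnK h) modnDr modn_small //; lia.
by rewrite (_ : (i + k - n + n - i = k)%N) ?modn_small //; lia.
Qed.

Lemma modn_offset (i j : 'I_n) m : ((i + (offset i j + m)) %% n = (j + m) %% n)%N.
Proof.
rewrite addnA -modnDml modnDmr /= modnDml.
have -> : (i + (j + n - i) = j + n)%N by have := ltn_ord i; lia.
by rewrite addnAC modnDr.
Qed.

Lemma shift_inj k : injective (shift k).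
Proof.
move=> x y /(congr1 val) /= /eqP; rewrite eqn_modDr !modn_small // => /eqP.
exact: val_inj.
Qed.

Lemma circ_entry_le_cycle_mean (a : nat -> R) lam :
  (forall k, (k < n)%N -> 0 <= a k) -> 0 <= lam ->
  (forall x s, uniq (x :: s) -> cycle_weight (circ n a) x s <= lam ^+ (size s).+1) ->
  forall k, (k < n)%N -> a k <= lam.
Proof.
move=> a_ge0 lam_ge0 hcyc k hk; pose x0 : 'I_n := Ordinal n0.
have := orbit_uniq (shift k) x0; have := cycle_orbit (@shift_inj k) x0.
rewrite /orbit -orderSpred trajectS; set s := traject _ _ _ => hfc /hcyc.
rewrite /cycle_weight (zip_fcycle hfc) big_map.
rewrite (eq_bigr (fun=> a k)) => [|y _]; last by rewrite circE offset_shift.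
by rewrite big_const_seq count_predT iter_mulr_1 ler_pXn2r // nnegrE a_ge0.
Qed.

Lemma circ_critical_entry (a : nat -> R) lam x s :
  (forall k, (k < n)%N -> 0 <= a k) -> (forall k, (k < n)%N -> a k <= lam) ->
  cycle_weight (circ n a) x s = lam ^+ (size s).+1 -> exists k : 'I_n, a k = lam.
Proof.
move=> a_ge0 a_le hcrit.
have [/existsP [k /eqP a_k]|/existsPn a_neq] := boolP [exists k : 'I_n, a k == lam].
  by exists k.
suff : cycle_weight (circ n a) x s < lam ^+ (size s).+1 by rewrite hcrit ltxx.
apply: cycle_weight_lt => i j.
by rewrite circE a_ge0 // lt_neqAle a_neq a_le.
Qed.

Section Walks.
Variable c : nat -> R.
Hypothesis c_ge0 : forall k, (k < n)%N -> 0 <= c k.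

Lemma circ_ge0 i j : 0 <= circ n c i j.
Proof. by rewrite circE c_ge0. Qed.

Lemma mx_pow_circ_ge_walk (ks : seq 'I_n) (i j : 'I_n) :
  ((i + \sum_(k <- ks) k) %% n = j)%N ->
  \prod_(k <- ks) c k <= mx_pow (circ n c) (size ks) i j.
Proof.
elim: ks i => [|k ks IH] i.
  rewrite big_nil addn0 modn_small // => /val_inj ->.
  by rewrite big_nil mx_pow0E eqxx.
rewrite !big_cons mx_powSE => hij.
apply: (bigmax_sup (shift k i)) => //; rewrite circE offset_shift //.
apply: ler_wpM2l; first exact: c_ge0.
by apply: IH; rewrite /= modnDml -addnA.
Qed.

Lemma mx_pow_circ_walk t (i j : 'I_n) :
  mx_pow (circ n c) t i j = 0 \/ exists ks : seq 'I_n,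
    [/\ size ks = t, ((i + \sum_(k <- ks) k) %% n = j)%N &
        mx_pow (circ n c) t i j = \prod_(k <- ks) c k].
Proof.
elim: t i => [|t IH] i.
  rewrite mx_pow0E; case: eqP => [->|_]; last by left.
  by right; exists [::]; rewrite !big_nil addn0 modn_small.
rewrite mx_powSE.
have [k _ ->] := eq_bigmax (Ordinal n0) predT
  (fun k => circ n c i k * mx_pow (circ n c) t k j) isT
  (fun k _ => mulr_ge0 (circ_ge0 i k) (mx_pow_ge0 circ_ge0 t k j)).
have [->|[ks [hsize hend ->]]] := IH k; first by left; rewrite mulr0.
right; exists (offset i k :: ks).
by rewrite /= hsize !big_cons modn_offset hend circE.
Qed.

Section Periodicity.
Hypothesis c_le1 : forall k, (k < n)%N -> c k <= 1.
Variable s0 : 'I_n.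
Hypothesis c_s0 : c s0 = 1.

Lemma mx_pow_circ_le_addn t i j :
  mx_pow (circ n c) t i j <= mx_pow (circ n c) (t + n) i j.
Proof.
have [->|[ks [<- hend ->]]] := mx_pow_circ_walk t i j.
  exact: mx_pow_ge0 circ_ge0 _ _ _.
have <- : size (ks ++ nseq n s0) = (size ks + n)%N by rewrite size_cat size_nseq.
apply: le_trans (mx_pow_circ_ge_walk _).
  by rewrite big_cat big_nseq /= c_s0 iter_mulr_1 expr1n mulr1.
by rewrite big_cat big_nseq /= iter_addn_0 addnA addnC modnMDl.
Qed.

Lemma mx_pow_circ_addn_le t i j : (n.-1 ^ 2 <= t)%N ->
  mx_pow (circ n c) (t + n) i j <= mx_pow (circ n c) t i j.
Proof.
move=> ht; have [->|[ks [hsize hend ->]]] := mx_pow_circ_walk (t + n) i j.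
  exact: mx_pow_ge0 circ_ge0 _ _ _.
have [g hg] : exists g : 'I_n, (n.-1 < count_mem g ks)%N.
  apply: count_mem_pigeonhole; rewrite card_ord hsize.
  by move: ht; rewrite -{2 3}(prednK n0); nia.
have [ks' hperm] := perm_nseq_cat (leq_trans (leqSpred n) hg).
have hsize' : size ks' = t.
  by have := perm_size hperm; rewrite size_cat size_nseq hsize; lia.
rewrite (perm_big _ hperm) big_cat big_nseq /= iter_mulr_1 -hsize'.
apply: le_trans (mx_pow_circ_ge_walk _).
  apply: ler_piMl; first by apply: prodr_ge0 => k _; apply: c_ge0.
  by apply: exprn_ile1; [apply: c_ge0 | apply: c_le1].
by rewrite -hend (perm_big _ hperm) big_cat big_nseq /= iter_addn_0 addnCA modnMDl.
Qed.

Lemma mx_pow_circ_periodic t : (n.-1 ^ 2 <= t)%N ->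
  mx_pow (circ n c) (t + n) = mx_pow (circ n c) t.
Proof.
move=> ht; apply/matrixP => i j; apply/le_anti.
by rewrite mx_pow_circ_addn_le // mx_pow_circ_le_addn.
Qed.

End Periodicity.
End Walks.
End Circulant.
End MaxAlgebra.

Theorem proposition3 (R : rcfType) (n : nat) (a : nat -> R) (lam : R) :
  (forall t, (t < n)%N -> 0 <= a t) ->
  circ n a != 0 ->
  is_max_cycle_mean (circ n a) lam ->
  ult_periodic (fun t => mx_pow (lam^-1 *: circ n a) t) /\
  forall T, is_transient (fun t => mx_pow (lam^-1 *: circ n a) t) T ->
    (T <= (n - 1) ^ 2 + 1)%N.
Proof.
move=> a_ge0 circ_neq0 [lam_ge0 [hcyc [x [s [_ hcrit]]]]].
have n0 : (0 < n)%N.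
  case: n a a_ge0 circ_neq0 {hcyc x s hcrit} => // a _.
  by rewrite (flatmx0 (circ 0 a)) eqxx.
have a_le := circ_entry_le_cycle_mean n0 a_ge0 lam_ge0 hcyc.
have lam_gt0 : 0 < lam.
  rewrite lt_def lam_ge0 andbT; apply: contraNneq circ_neq0 => lam0.
  apply/eqP/matrixP => i j; rewrite circE mxE.
  by apply/le_anti; rewrite a_ge0 // -lam0 a_le.
have [s0 a_s0] := circ_critical_entry n0 a_ge0 a_le hcrit.
pose c k := lam^-1 * a k.
have -> : lam^-1 *: circ n a = circ n c by apply/matrixP => i j; rewrite !mxE.
have hper : periodic_from (mx_pow (circ n c)) ((n - 1) ^ 2 + 1).
  exists n; split => // t ht; apply: (@mx_pow_circ_periodic _ _ n0 _ _ _ s0).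
  - by move=> k hk; rewrite mulr_ge0 ?invr_ge0 ?a_ge0.
  - by move=> k hk; rewrite ler_pdivrMl // mulr1 a_le.
  - by rewrite /c a_s0 mulVf // gt_eqF.
  - by apply: leq_trans ht; rewrite subn1 leq_addr.
split.
  by exists ((n - 1) ^ 2 + 1)%N; rewrite leq_addl.
by move=> T [_ [_ hmin]]; apply: hmin; rewrite ?leq_addl.
Qed.
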